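(* Under the standing hypotheses (S), for every $\xi\in\mathbb H$ and $n\ge0$, \[\frac1{2\tau}\Big(\|\xi-X_{n+1}^\tau\|^2_{\mathbb H}-\|\xi-X_n^\tau\|^2_{\mathbb H}\Big)+\frac\lambda4\Big(\|\xi-X_n^\tau\|^2_{\mathbb H}+\|\xi-X_{n+1}^\tau\|^2_{\mathbb H}\Big)\] \[\le\phi^{\#}_{\rho_0}(\xi)-\phi^{\#}_{\rho_0}(X_{n+1}^\tau)+\frac\tau4\Big(\|\nabla\phi^{\#}_{\rho_0}(X_n^\tau)\|^2_{\mathbb H}-\|\nabla\phi^{\#}_{\rho_0}(X_{n+1}^\tau)\|^2_{\mathbb H}\Big)-\Big(\frac1{2\tau}+\frac\lambda4\Big)\|X_n^\tau-X_{n+1}^\tau\|^2_{\mathbb H}.\]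
   Context: Standing hypotheses (S): $\rho_0\in\mathcal P_2(\mathbb R^d)$; $\mathbb H=L^2(\mathbb R^d;\rho_0)$ is the Hilbert space of $\rho_0$-square-integrable maps $\mathbb R^d\to\mathbb R^d$ with $\langle\xi_1,\xi_2\rangle_{\mathbb H}=\int\langle\xi_1,\xi_2\rangle d\rho_0$; $\phi:\mathcal P_2(\mathbb R^d)\to\mathbb R$ has lift $\phi^{\#}_{\rho_0}(\xi):=\phi(\xi_{\#}\rho_0)$ which is Fréchet differentiable on $\mathbb H$ (gradient $\nabla\phi^{\#}_{\rho_0}$), $\lambda$-convex on $\mathbb H$ for some $\lambda\in\mathbb R$ (i.e. $\phi^{\#}_{\rho_0}((1-t)\xi_1+t\xi_2)\le(1-t)\phi^{\#}_{\rho_0}(\xi_1)+t\phi^{\#}_{\rho_0}(\xi_2)-\frac\lambda2t(1-t)\|\xi_1-\xi_2\|_{\mathbb H}^2$), and $\inf_{\mathbb H}\phi^{\#}_{\rho_0}>-\infty$; the time step $\tau>0$ satisfies $\lambda/2+1/\tau>0$; $X_0^\tau\in\mathbb H$. Lagrangian trapezoidal scheme: $X_{n+1}^\tau$ is the (unique) minimizer over $\xi\in\mathbb H$ of $\tfrac12\phi^{\#}_{\rho_0}(\xi)+\tfrac12\langle\nabla\phi^{\#}_{\rho_0}(X_n^\tau),\xi\rangle_{\mathbb H}+\tfrac1{2\tau}\|\xi-X_n^\tau\|^2_{\mathbb H}$; equivalently $X_{n+1}^\tau=X_n^\tau-\frac\tau2\big(\nabla\phi^{\#}_{\rho_0}(X_{n+1}^\tau)+\nabla\phi^{\#}_{\rho_0}(X_n^\tau)\big)$.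 *)

From HB Require Import structures.
From mathcomp Require Import all_boot all_order all_algebra.
From mathcomp Require Import reals.
Set Implicit Arguments. Unset Strict Implicit. Unset Printing Implicit Defensive.
Import Order.TTheory GRing.Theory Num.Theory.
Local Open Scope ring_scope.

(* A real inner-product (pre-Hilbert) space: an R-module V with a symmetric,
   bilinear, positive definite form ip.  The space H = L^2(R^d; rho_0) of the
   paper is an instance. *)
Record inner_product (R : realType) (V : lmodType R) (ip : V -> V -> R) : Prop :=
  InnerProduct {
    ip_sym : forall u v, ip u v = ip v u;
    ip_linl : forall (a : R) (u v w : V), ip (a *: u + v) w = a * ip u w + ip v w;
    ip_ge0 : forall u, 0 <= ip u u;
    ip_eq0 : forall u, ip u u = 0 -> u = 0 }.

Definition hnorm (R : realType) (V : lmodType R) (ip : V -> V -> R) (u : V) : R :=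
  Num.sqrt (ip u u).

Definition frechet_gradient (R : realType) (V : lmodType R) (ip : V -> V -> R)
  (f : V -> R) (g : V -> V) : Prop :=
  forall (x : V) (eps : R), 0 < eps -> exists2 delta : R, 0 < delta &
    forall h : V, hnorm ip h < delta ->
      `| f (x + h) - f x - ip (g x) h | <= eps * hnorm ip h.

Definition lambda_convex (R : realType) (V : lmodType R) (ip : V -> V -> R)
  (lam : R) (f : V -> R) : Prop :=
  forall (x1 x2 : V) (t : R), 0 <= t -> t <= 1 ->
    f ((1 - t) *: x1 + t *: x2) <=
      (1 - t) * f x1 + t * f x2 - lam / 2 * t * (1 - t) * hnorm ip (x1 - x2) ^+ 2.

Definition trap_functional (R : realType) (V : lmodType R) (ip : V -> V -> R)
  (f : V -> R) (g : V -> V) (tau : R) (Xn xi : V) : R :=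
  1 / 2 * f xi + 1 / 2 * ip (g Xn) xi + 1 / (2 * tau) * hnorm ip (xi - Xn) ^+ 2.

Definition trapezoidal_scheme (R : realType) (V : lmodType R) (ip : V -> V -> R)
  (f : V -> R) (g : V -> V) (tau : R) (X : nat -> V) : Prop :=
  forall (n : nat) (xi : V),
    trap_functional ip f g tau (X n) (X n.+1) <= trap_functional ip f g tau (X n) xi.

From HB Require Import structures.
From mathcomp Require Import all_boot all_order all_algebra.
From mathcomp Require Import reals ring lra.
Import Order.TTheory GRing.Theory Num.Theory.
Local Open Scope ring_scope.

(* Minimality of X (n+1) forces the one-sided derivative of the trapezoidal
   functional along any direction to be nonnegative, which gives the implicit
   step X (n+1) = X n - tau/2 (grad phi (X (n+1)) + grad phi (X n)).
   Differentiability and lam-convexity give the gradient inequality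
   <grad phi x, y - x> <= phi y - phi x - lam/2 ||y - x||^2.  Half the sum of
   its instances for the pairs (X (n+1), xi), (X n, xi) and (X (n+1), X n)
   is the claimed estimate once the increment X (n+1) - X n is eliminated
   with the implicit step, which turns the remaining quadratic terms into an
   exact identity. *)

Lemma ler_of_slope (R : realFieldType) (d c b : R) :
  (forall e, 0 < e -> exists2 t0, 0 < t0 &
     forall t, 0 < t -> t <= t0 -> t * d <= t * c + t ^+ 2 * b + t * e) ->
  d <= c.
Proof.
move=> slope; apply/ler_addgt0Pr => e e0.
have [t0 t0_gt0 slope_t0] := slope (e / 2) ltac:(lra).
have b1_gt0 : 0 < 2 * (`|b| + 1) by rewrite mulr_gt0 // ltr_wpDl.
pose t := Num.min t0 (e / (2 * (`|b| + 1))).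
have t_gt0 : 0 < t by rewrite lt_min t0_gt0 divr_gt0.
have t_small : t * (2 * (`|b| + 1)) <= e by rewrite -ler_pdivlMr // ge_min lexx orbT.
have tb_small : t * b <= e / 2 by have := ler_norm b; nra.
have := slope_t0 t t_gt0 ltac:(by rewrite ge_min lexx).
rewrite expr2 -mulrA -!mulrDr ler_pM2l //; lra.
Qed.

Section RightDerivative.
Context {R : realType} {V : lmodType R}.

Definition right_derivative (f : V -> R) (x h : V) (d : R) : Prop :=
  forall e, 0 < e -> exists2 t0, 0 < t0 &
    forall t, 0 < t -> t <= t0 -> `|f (x + t *: h) - f x - t * d| <= t * e.

Context {f : V -> R} {x h : V} {d c : R} (b : R).
Hypothesis f_d : right_derivative f x h d.

Lemma right_derivative_le :
  (forall t, 0 < t -> t <= 1 -> f (x + t *: h) - f x <= t * c + t ^+ 2 * b) ->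
  d <= c.
Proof.
move=> f_ub; apply: (@ler_of_slope _ _ _ b) => e e0.
have [t0 t0_gt0 f_t0] := f_d _ e0.
exists (Num.min t0 1); first by rewrite lt_min t0_gt0 ltr01.
move=> t t_gt0; rewrite le_min => /andP[t_t0 t_le1].
have /ler_normlP[+ _] := f_t0 t t_gt0 t_t0.
have := f_ub t t_gt0 t_le1; lra.
Qed.

Lemma right_derivative_ge :
  (forall t, 0 < t -> t <= 1 -> t * c + t ^+ 2 * b <= f (x + t *: h) - f x) ->
  c <= d.
Proof.
move=> f_lb; rewrite -lerN2; apply: (@ler_of_slope _ _ _ (- b)) => e e0.
have [t0 t0_gt0 f_t0] := f_d _ e0.
exists (Num.min t0 1); first by rewrite lt_min t0_gt0 ltr01.
move=> t t_gt0; rewrite le_min => /andP[t_t0 t_le1].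
have /ler_normlP[_] := f_t0 t t_gt0 t_t0.
have := f_lb t t_gt0 t_le1; lra.
Qed.

End RightDerivative.

Section InnerProductSpace.
Context {R : realType} {V : lmodType R} {ip : V -> V -> R}.
Hypothesis ipP : inner_product ip.

Lemma ipDl u v w : ip (u + v) w = ip u w + ip v w.
Proof. by rewrite -{1}[u]scale1r ip_linl // mul1r. Qed.

Lemma ip0l w : ip 0 w = 0.
Proof. by apply: (addrI (ip 0 w)); rewrite -ipDl !addr0. Qed.

Lemma ipZl a u w : ip (a *: u) w = a * ip u w.
Proof. by rewrite -[a *: u]addr0 ip_linl // ip0l addr0. Qed.

Lemma ipNl u w : ip (- u) w = - ip u w.
Proof. by rewrite -scaleN1r ipZl mulN1r. Qed.

Lemma ipDr u v w : ip w (u + v) = ip w u + ip w v.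
Proof. by rewrite !(ip_sym ipP w) ipDl. Qed.

Lemma ipZr a u w : ip w (a *: u) = a * ip w u.
Proof. by rewrite !(ip_sym ipP w) ipZl. Qed.

Lemma ipNr u w : ip w (- u) = - ip w u.
Proof. by rewrite !(ip_sym ipP w) ipNl. Qed.

Definition ipE := (ipDl, ipDr, ipZl, ipZr, ipNl, ipNr).

Lemma hnorm_sqr u : hnorm ip u ^+ 2 = ip u u.
Proof. by rewrite /hnorm sqr_sqrtr // ip_ge0. Qed.

Lemma hnormZ (a : R) u : hnorm ip (a *: u) = `|a| * hnorm ip u.
Proof.
by rewrite /hnorm ipZl ipZr mulrA -expr2 sqrtrM ?sqr_ge0 ?sqrtr_sqr.
Qed.

Lemma hnormN u : hnorm ip (- u) = hnorm ip u.
Proof. by rewrite /hnorm ipNl ipNr opprK. Qed.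

Lemma hnorm_sqrD u w :
  hnorm ip (u + w) ^+ 2 = hnorm ip u ^+ 2 + 2 * ip u w + hnorm ip w ^+ 2.
Proof. by rewrite !hnorm_sqr !ipE (ip_sym ipP w u); lra. Qed.

Lemma frechet_right_derivative {f : V -> R} {g : V -> V} x h :
  frechet_gradient ip f g -> right_derivative f x h (ip (g x) h).
Proof.
move=> f_g e e_gt0; set N := hnorm ip h.
have N1_gt0 : 0 < N + 1 by rewrite ltr_wpDl ?sqrtr_ge0.
set eps := e / (N + 1).
have eps_gt0 : 0 < eps by rewrite divr_gt0.
have epsE : eps * (N + 1) = e by rewrite mulfVK ?gt_eqF.
have [delta delta_gt0 f_delta] := f_g x eps eps_gt0.
exists (delta / (N + 1)); first by rewrite divr_gt0.
move=> t t_gt0; rewrite ler_pdivlMr // => t_small.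
have thE : hnorm ip (t *: h) = t * N by rewrite hnormZ gtr0_norm.
have := f_delta (t *: h); rewrite thE ipZr => /(_ ltac:(lra)) /le_trans; apply.
nra.
Qed.

Lemma lambda_convex_gradient {f : V -> R} {g : V -> V} {lam : R} x y :
  frechet_gradient ip f g -> lambda_convex ip lam f ->
  ip (g x) (y - x) <= f y - f x - lam / 2 * hnorm ip (y - x) ^+ 2.
Proof.
move=> f_g f_cvx; set K := hnorm ip (y - x) ^+ 2.
apply: (right_derivative_le (lam / 2 * K) (frechet_right_derivative x (y - x) f_g)).
move=> t t_gt0 t_le1.
have := f_cvx x y t (ltW t_gt0) t_le1.
have -> : (1 - t) *: x + t *: y = x + t *: (y - x).
  by rewrite scalerBl scale1r scalerBr addrA addrAC.
rewrite -[x - y]opprB hnormN -/K expr2; lra.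
Qed.

Lemma trap_functional_argmin {phi : V -> R} {g : V -> V} {tau : R} {Xn Y : V} :
  frechet_gradient ip phi g -> 0 < tau ->
  (forall xi, trap_functional ip phi g tau Xn Y <= trap_functional ip phi g tau Xn xi) ->
  Y = Xn - (tau / 2) *: (g Y + g Xn).
Proof.
move=> phi_g tau_gt0 Y_min.
set v := g Y + g Xn + (2 / tau) *: (Y - Xn).
suff v0 : v = 0.
  have /(congr1 ( *:%R (tau / 2))) : (2 / tau) *: (Y - Xn) = - (g Y + g Xn).
    by apply/eqP; rewrite -addr_eq0 addrC -/v v0.
  rewrite scalerA mulrA divfK ?divff ?gt_eqF // scale1r scalerN.
  by move=> <-; rewrite addrC subrK.
(* v is twice the gradient of the functional at Y; its derivative along -v
   is -<v, v>/2, and minimality makes it nonnegative. *)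
apply: (ip_eq0 ipP); apply/le_anti; rewrite ip_ge0 // andbT.
set h := - v; set d := Y - Xn.
have s2E : 1 / (2 * tau) = tau^-1 / 2 by rewrite invfM mul1r mulrC.
have : - ip (g Xn) h - 2 * tau^-1 * ip d h <= ip (g Y) h.
  apply: (right_derivative_ge (- tau^-1 * ip h h) (frechet_right_derivative Y h phi_g)).
  move=> t t_gt0 t_le1; have := Y_min (Y + t *: h).
  rewrite /trap_functional s2E (addrAC Y) -/d (hnorm_sqrD d) hnormZ (ger0_norm (ltW t_gt0)).
  rewrite ipDr !ipZr exprMn !hnorm_sqr; lra.
have -> : ip v v = ip (g Y) v + ip (g Xn) v + 2 / tau * ip d v.
  by rewrite {1}/v 2!ipDl ipZl.
rewrite /h !ipNr; lra.
Qed.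

Lemma trapezoidal_energy_identity {tau : R} {x y a b : V} xi :
  tau != 0 -> y = x - (tau / 2) *: (b + a) ->
  1 / (2 * tau) * (hnorm ip (xi - y) ^+ 2 - hnorm ip (xi - x) ^+ 2
                   + hnorm ip (x - y) ^+ 2)
  + tau / 4 * (hnorm ip b ^+ 2 - hnorm ip a ^+ 2)
  = (ip b (xi - y) + ip a (xi - x) + ip b (x - y)) / 2.
Proof.
move=> tau_neq0 ->; set c := tau / 2.
have -> : xi - (x - c *: (b + a)) = xi - x + c *: (b + a).
  by rewrite opprB addrA addrAC.
have -> : x - (x - c *: (b + a)) = c *: (b + a) by rewrite opprB addrCA subrr addr0.
move: (xi - x) => e.
rewrite !hnorm_sqr !ipE (ip_sym ipP e a) (ip_sym ipP e b) (ip_sym ipP a b) /c.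
by field.
Qed.

End InnerProductSpace.

Theorem mainTheorem9 (R : realType) (H : lmodType R) (ip : H -> H -> R)
  (phi : H -> R) (gphi : H -> H) (lam tau : R) (X : nat -> H) :
  inner_product ip ->
  frechet_gradient ip phi gphi ->
  lambda_convex ip lam phi ->
  (exists m : R, forall xi : H, m <= phi xi) ->
  0 < tau -> 0 < lam / 2 + 1 / tau ->
  trapezoidal_scheme ip phi gphi tau X ->
  forall (xi : H) (n : nat),
    1 / (2 * tau) * (hnorm ip (xi - X n.+1) ^+ 2 - hnorm ip (xi - X n) ^+ 2)
    + lam / 4 * (hnorm ip (xi - X n) ^+ 2 + hnorm ip (xi - X n.+1) ^+ 2)
    <= phi xi - phi (X n.+1)
       + tau / 4 * (hnorm ip (gphi (X n)) ^+ 2 - hnorm ip (gphi (X n.+1)) ^+ 2)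
       - (1 / (2 * tau) + lam / 4) * hnorm ip (X n - X n.+1) ^+ 2.
Proof.
(* The lower bound on phi and lam/2 + 1/tau > 0 only make the scheme well
   posed; the estimate holds along any sequence of minimizers. *)
move=> ipP phi_g phi_cvx _ tau_gt0 _ X_trap xi n.
have X_step := trap_functional_argmin ipP phi_g tau_gt0 (X_trap n).
have := trapezoidal_energy_identity ipP xi (lt0r_neq0 tau_gt0) X_step.
have := lambda_convex_gradient ipP (X n.+1) xi phi_g phi_cvx.
have := lambda_convex_gradient ipP (X n) xi phi_g phi_cvx.
have := lambda_convex_gradient ipP (X n.+1) (X n) phi_g phi_cvx.
rewrite -[X n - X n.+1]opprB (hnormN ipP); lra.
Qed.
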